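(* Let $G_1,G_2$ be connected infinite graphs with vertex degrees uniformly bounded, which are quasi-isometric. If $G_2$ is weighted hyperfinite, then so is $G_1$.
   Context: $G_1$ and $G_2$ are quasi-isometric if there is a map $\iota:V(G_1)\to V(G_2)$ and a constant $c>0$ such that $c^{-1}d_{G_1}(x,y)-c\le d_{G_2}(\iota(x),\iota(y))\le c\,d_{G_1}(x,y)+c$ for all $x,y\in V(G_1)$, and every $z\in V(G_2)$ is within $d_{G_2}$-distance $c$ of $\iota(V(G_1))$; here $d_{G_i}$ are the graph (shortest path) metrics. A connected infinite bounded-degree graph $G$ is weighted hyperfinite if for every $\epsilon>0$ there is $K_\epsilon>0$ such that for every finite induced subgraph $L\subseteq G$ and every $w:V(L)\to[0,\infty)$ there is $M\subseteq V(L)$ with $\sum_{x\in M}w(x)\le\epsilon\sum_{x\in V(L)}w(x)$ such that every connected component of $L$ with $M$ deleted has at most $K_\epsilon$ vertices. *)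

From Stdlib Require Import Reals List Relations.
Import ListNotations.
Open Scope R_scope.

Definition is_graph {V : Type} (adj : V -> V -> Prop) : Prop :=
  (forall x y, adj x y -> adj y x) /\ (forall x, ~ adj x x).

Inductive walk {V : Type} (adj : V -> V -> Prop) : nat -> V -> V -> Prop :=
| walk_nil : forall x, walk adj 0 x x
| walk_cons : forall n x y z, adj x y -> walk adj n y z -> walk adj (S n) x z.

Definition is_dist {V : Type} (adj : V -> V -> Prop) (x y : V) (n : nat) : Prop :=
  walk adj n x y /\ (forall k, walk adj k x y -> (n <= k)%nat).

Definition connected {V : Type} (adj : V -> V -> Prop) : Prop :=
  forall x y : V, exists n, walk adj n x y.

Definition infinite_vertices (V : Type) : Prop :=
  forall l : list V, exists v, ~ In v l.

Definition bounded_degree {V : Type} (adj : V -> V -> Prop) : Prop :=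
  exists D : nat, forall v : V,
    exists l : list V, (length l <= D)%nat /\ (forall u, adj v u -> In u l).

Definition quasi_isometric {V1 V2 : Type}
  (adj1 : V1 -> V1 -> Prop) (adj2 : V2 -> V2 -> Prop) : Prop :=
  exists (iota : V1 -> V2) (c : R), 0 < c /\
    (forall (x y : V1) (n m : nat), is_dist adj1 x y n ->
        is_dist adj2 (iota x) (iota y) m ->
        / c * INR n - c <= INR m <= c * INR n + c) /\
    (forall z : V2, exists (x : V1) (k : nat),
        is_dist adj2 z (iota x) k /\ INR k <= c).

Definition sumw {V : Type} (w : V -> R) (l : list V) : R :=
  fold_right (fun x acc => w x + acc) 0 l.

Definition induced_adj {V : Type} (adj : V -> V -> Prop) (P : V -> Prop) : V -> V -> Prop :=
  fun a b => P a /\ P b /\ adj a b.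

(* A finite induced subgraph L is given by its
   (duplicate-free) finite vertex list; M is a sublist of it; the
   connected component of x in L with M deleted is the set of vertices
   reachable from x in the subgraph induced on V(L) \ M. *)
Definition weighted_hyperfinite {V : Type} (adj : V -> V -> Prop) : Prop :=
  forall eps : R, 0 < eps -> exists K : R, 0 < K /\
    forall (L : list V) (w : V -> R), NoDup L ->
      (forall x, In x L -> 0 <= w x) ->
      exists M : list V, NoDup M /\ incl M L /\
        sumw w M <= eps * sumw w L /\
        (forall x, In x L -> ~ In x M ->
           forall C : list V, NoDup C ->
             (forall y, In y C ->
                 clos_refl_trans V
                   (induced_adj adj (fun v => In v L /\ ~ In v M)) x y) ->
             INR (length C) <= K).

(* Let iota : V1 -> V2 be a quasi-isometry with constant c.  Only two of its
   properties matter: adjacent vertices of G1 are sent within G2-distance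
   B >= 2c (coarse Lipschitz), and vertices with the same image are within
   G1-distance F >= c^2 (bounded fibres).  With bounded degrees, balls of
   radius r have at most (D+1)^r vertices, so every fibre of iota has at
   most N1 = (D1+1)^F elements and every vertex of G1 is "near" (within
   distance B of its image) at most N2 = (D2+1)^B vertices of G2.

   Given a finite L in G1 with weights w, push the weights forward to the
   "shadow" L' of L (all vertices of G2 near some x in L): a vertex z gets
   the total weight of the x in L near it, so the total pushed weight is at
   most N2 times the total weight.  Applying hyperfiniteness of G2 with
   eps / N2 yields M' in L'; its pull-back M (the x in L near some z in M')
   weighs at most eps times the total weight by a union bound.  A path in L
   avoiding M is mapped by iota into walks of length <= B inside L' avoiding
   M', so iota maps each component of L - M into a component of L' - M'
   (of size <= K'); as fibres have at most N1 points, the component has at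
   most N1 * K' vertices. *)

From Stdlib Require Import Reals List Relations Lra Lia Classical ClassicalEpsilon ZArith.
Import ListNotations.
Open Scope R_scope.

(* Classical decision of propositions, used to filter lists by
   undecidable predicates such as "being within distance B". *)
Definition dec (P : Prop) : bool :=
  if excluded_middle_informative P then true else false.

Lemma decT (P : Prop) : dec P = true <-> P.
Proof.
  unfold dec; destruct (excluded_middle_informative P); split; intros; auto; discriminate.
Qed.

Definition eqdec {A : Type} : forall x y : A, {x = y} + {x <> y} :=
  fun x y => excluded_middle_informative (x = y).

(* Every real is bounded by a natural number (turns the real constant c
   into the integer radii B and F). *)
Lemma nat_unbounded (r : R) : exists n : nat, r <= INR n.
Proof.
  destruct (archimed r) as [Hup _].
  exists (Z.to_nat (up r)).
  destruct (Z_le_gt_dec 0 (up r)) as [Hz | Hz].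
  - rewrite INR_IZR_INZ, Z2Nat.id by lia. lra.
  - apply Z.gt_lt, IZR_lt in Hz. pose proof (pos_INR (Z.to_nat (up r))). lra.
Qed.

Lemma least_witness (P : nat -> Prop) :
  (exists n, P n) -> exists n, P n /\ forall k, P k -> (n <= k)%nat.
Proof.
  intros [n Hn]. revert Hn. induction n as [n IH] using lt_wf_ind. intros Hn.
  destruct (classic (exists k, (k < n)%nat /\ P k)) as [[k [Hk Pk]] | Hnone].
  - exact (IH k Hk Pk).
  - exists n; split; auto. intros k Pk. destruct (Nat.le_gt_cases n k); auto.
    exfalso; apply Hnone; eauto.
Qed.

Lemma walk_snoc {V : Type} (adj : V -> V -> Prop) :
  forall n x z, walk adj (S n) x z -> exists y, walk adj n x y /\ adj y z.
Proof.
  induction n; intros x z Hw.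
  - inversion Hw as [| ? ? y ? Hxy Hyz]; subst. inversion Hyz; subst.
    exists x; split; [constructor | auto].
  - inversion Hw as [| ? ? y ? Hxy Hyz]; subst.
    destruct (IHn _ _ Hyz) as [y' [Hw' Ha']].
    exists y'; split; auto. econstructor; eauto.
Qed.

Lemma exists_dist {V : Type} (adj : V -> V -> Prop) :
  connected adj -> forall x y, exists n, is_dist adj x y n.
Proof. intros Hc x y. apply least_witness, Hc. Qed.

Lemma is_dist_adj {V : Type} (adj : V -> V -> Prop) (x y : V) :
  is_graph adj -> adj x y -> is_dist adj x y 1.
Proof.
  intros [_ Hirr] Hxy. split.
  - econstructor; eauto. constructor.
  - intros k Hk. destruct k; [| lia]. inversion Hk; subst. exfalso; eapply Hirr; eauto.
Qed.

Lemma is_dist_refl {V : Type} (adj : V -> V -> Prop) (x : V) : is_dist adj x x 0.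
Proof. split; [constructor | intros; lia]. Qed.

Lemma walk_induced {V : Type} (adj : V -> V -> Prop) (Q : V -> Prop) :
  forall n u v, walk adj n u v ->
  (forall z j, (j <= n)%nat -> walk adj j u z -> Q z) ->
  clos_refl_trans V (induced_adj adj Q) u v.
Proof.
  induction 1 as [x | n x y z Hxy _ IH]; intros HQ.
  - apply rt_refl.
  - assert (Qx : Q x) by (apply (HQ x 0%nat); [lia | constructor]).
    assert (Qy : Q y) by (apply (HQ y 1%nat); [lia | econstructor; eauto; constructor]).
    apply rt_trans with y.
    + apply rt_step. repeat split; auto.
    + apply IH. intros z' j Hj Hw. apply (HQ z' (S j)); [lia | econstructor; eauto].
Qed.

(** * Balls in bounded-degree graphs *)

Lemma choose_nbr {V : Type} (adj : V -> V -> Prop) : bounded_degree adj ->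
  exists (D : nat) (nbr : V -> list V),
    (forall v, (length (nbr v) <= D)%nat) /\ (forall v u, adj v u -> In u (nbr v)).
Proof.
  intros [D HD]. exists D, (fun v => proj1_sig (constructive_indefinite_description _ (HD v))).
  split; intros v; destruct (constructive_indefinite_description _ (HD v)) as [l [H1 H2]];
    simpl; auto.
Qed.

Section Balls.
Context {V : Type} (adj : V -> V -> Prop) (nbr : V -> list V).

(* [ball x r] lists (with repetitions) all vertices within distance r of x. *)
Fixpoint ball (x : V) (r : nat) : list V :=
  match r with
  | 0 => [x]
  | S r => ball x r ++ flat_map nbr (ball x r)
  end.

Lemma ball_mono (x : V) (r r' : nat) : (r <= r')%nat -> incl (ball x r) (ball x r').
Proof.
  induction 1; [apply incl_refl |].
  intros a Ha. simpl. apply in_or_app; left; auto.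
Qed.

Section Covering.
Hypothesis nbr_complete : forall v u, adj v u -> In u (nbr v).

Lemma ball_cover (n r : nat) (x z : V) : (n <= r)%nat -> walk adj n x z -> In z (ball x r).
Proof.
  intros Hle Hw. apply (ball_mono x n r Hle). clear Hle.
  revert x z Hw; induction n; intros x z Hw.
  - inversion Hw; subst. simpl; auto.
  - destruct (walk_snoc adj n x z Hw) as [y [Hxy Hyz]].
    simpl. apply in_or_app; right. apply in_flat_map. exists y; split; auto.
Qed.
End Covering.

Section Size.
Variable D : nat.
Hypothesis nbr_length : forall v, (length (nbr v) <= D)%nat.

Lemma ball_length (x : V) (r : nat) : (length (ball x r) <= (D + 1) ^ r)%nat.
Proof.
  assert (Hflat : forall l, (length (flat_map nbr l) <= D * length l)%nat).
  { induction l as [| a l IH]; [simpl; lia |]. cbn [flat_map length].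
    rewrite length_app. specialize (nbr_length a). lia. }
  induction r; [simpl; lia |]. cbn [ball]. rewrite length_app, Nat.pow_succ_r'.
  pose proof (Hflat (ball x r)). nia.
Qed.
End Size.
End Balls.

Lemma pow_succ_pos (d r : nat) : (0 < (d + 1) ^ r)%nat.
Proof. pose proof (Nat.pow_nonzero (d + 1) r). lia. Qed.

Lemma sumw_plus {A : Type} (f g : A -> R) (l : list A) :
  sumw (fun x => f x + g x) l = sumw f l + sumw g l.
Proof. induction l; simpl; [ring | rewrite IHl; ring]. Qed.

Lemma sumw_scal {A : Type} (a : R) (f : A -> R) (l : list A) :
  sumw (fun x => a * f x) l = a * sumw f l.
Proof. induction l; simpl; [ring | rewrite IHl; ring]. Qed.

Lemma sumw_zero {A : Type} (l : list A) : sumw (fun _ => 0) l = 0.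
Proof. induction l; simpl; [ring | rewrite IHl; ring]. Qed.

Lemma sumw_ext {A : Type} (f g : A -> R) (l : list A) :
  (forall x, In x l -> f x = g x) -> sumw f l = sumw g l.
Proof. induction l; simpl; intros H; auto. rewrite H, IHl; auto. Qed.

Lemma sumw_le {A : Type} (f g : A -> R) (l : list A) :
  (forall x, In x l -> f x <= g x) -> sumw f l <= sumw g l.
Proof.
  induction l as [| a l IH]; simpl; intros H; [lra |].
  specialize (IH (fun x h => H x (or_intror h))). specialize (H a (or_introl eq_refl)). lra.
Qed.

Lemma sumw_nonneg {A : Type} (f : A -> R) (l : list A) :
  (forall x, In x l -> 0 <= f x) -> 0 <= sumw f l.
Proof. intros H. rewrite <- (sumw_zero l). apply sumw_le; auto. Qed.

Lemma sumw_filter {A : Type} (w : A -> R) (p : A -> bool) (l : list A) :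
  sumw w (filter p l) = sumw (fun x => if p x then w x else 0) l.
Proof. induction l; simpl; auto. destruct (p a); simpl; rewrite IHl; ring. Qed.

Lemma sumw_swap {A B : Type} (f : A -> B -> R) (L : list A) (L' : list B) :
  sumw (fun z => sumw (fun x => f x z) L) L' = sumw (fun x => sumw (fun z => f x z) L') L.
Proof.
  induction L'; simpl; [rewrite sumw_zero; auto |].
  rewrite IHL', <- sumw_plus. auto.
Qed.

Lemma sumw_const_if {A : Type} (a : R) (p : A -> bool) (l : list A) :
  sumw (fun z => if p z then a else 0) l = a * INR (length (filter p l)).
Proof.
  induction l as [| b l IH]; simpl; [ring |].
  destruct (p b); cbn [filter length sumw fold_right];
    fold (sumw (fun z => if p z then a else 0) l); rewrite IH; try rewrite S_INR; ring.
Qed.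

Section Relational.
Context {A B : Type} (rel : A -> B -> bool) (w : A -> R) (L : list A).
Hypothesis w_nonneg : forall x, In x L -> 0 <= w x.

Definition rel_weight (z : B) : R := sumw w (filter (fun x => rel x z) L).

Lemma union_bound (M' : list B) :
  sumw w (filter (fun x => existsb (rel x) M') L) <= sumw rel_weight M'.
Proof.
  unfold rel_weight.
  rewrite (sumw_ext _ (fun z => sumw (fun x => if rel x z then w x else 0) L))
    by (intros; apply sumw_filter).
  rewrite sumw_swap, sumw_filter. apply sumw_le. intros x Hx.
  specialize (w_nonneg x Hx). clear -w_nonneg.
  induction M' as [| z M' IH]; simpl; [lra |].
  assert (0 <= sumw (fun z => if rel x z then w x else 0) M')
    by (apply sumw_nonneg; intros; destruct (rel x _); lra).
  destruct (rel x z); simpl; lra.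
Qed.

Lemma rel_weight_total (L' : list B) (N : nat) :
  (forall x, In x L -> (length (filter (rel x) L') <= N)%nat) ->
  sumw rel_weight L' <= INR N * sumw w L.
Proof.
  intros Hdeg. unfold rel_weight.
  rewrite (sumw_ext _ (fun z => sumw (fun x => if rel x z then w x else 0) L))
    by (intros; apply sumw_filter).
  rewrite sumw_swap, <- sumw_scal. apply sumw_le. intros x Hx.
  rewrite sumw_const_if. pose proof (le_INR _ _ (Hdeg x Hx)). specialize (w_nonneg x Hx). nra.
Qed.
End Relational.

Lemma fibre_count {A B : Type} (f : A -> B) (N : nat) :
  (forall b (l : list A), NoDup l -> (forall y, In y l -> f y = b) -> (length l <= N)%nat) ->
  forall (Dl : list B) (C : list A), NoDup C -> (forall y, In y C -> In (f y) Dl) ->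
  (length C <= N * length Dl)%nat.
Proof.
  intros Hfib. induction Dl as [| b Dl IH]; intros C HC Hin.
  - destruct C as [| y C]; simpl; [lia |]. exfalso; apply (Hin y); simpl; auto.
  - rewrite <- (filter_length (fun y => dec (f y = b)) C).
    assert (Hb : (length (filter (fun y => dec (f y = b)) C) <= N)%nat).
    { apply (Hfib b). { apply NoDup_filter; auto. }
      intros y Hy. apply filter_In in Hy. apply decT, Hy. }
    assert (Hrest : (length (filter (fun y => negb (dec (f y = b))) C) <= N * length Dl)%nat).
    { apply IH. { apply NoDup_filter; auto. }
      intros y Hy. apply filter_In in Hy. destruct Hy as [Hy Hneq].
      destruct (Hin y Hy) as [Heq | Hy']; auto. subst.
      rewrite (proj2 (decT (f y = f y)) eq_refl) in Hneq. discriminate. }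
    simpl. lia.
Qed.

(** * Transfer along a coarse embedding *)

Section Transfer.
Context {V1 V2 : Type} (adj1 : V1 -> V1 -> Prop) (adj2 : V2 -> V2 -> Prop).
Context (nbr1 : V1 -> list V1) (D1 : nat) (nbr2 : V2 -> list V2) (D2 : nat).
Hypothesis nbr1_length : forall v, (length (nbr1 v) <= D1)%nat.
Hypothesis nbr1_complete : forall v u, adj1 v u -> In u (nbr1 v).
Hypothesis nbr2_length : forall v, (length (nbr2 v) <= D2)%nat.
Hypothesis nbr2_complete : forall v u, adj2 v u -> In u (nbr2 v).

Variables (iota : V1 -> V2) (B F : nat).
Hypothesis iota_lipschitz :
  forall x y, adj1 x y -> exists m, (m <= B)%nat /\ walk adj2 m (iota x) (iota y).
Hypothesis iota_fibres :
  forall x y, iota x = iota y -> exists n, (n <= F)%nat /\ walk adj1 n x y.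

Definition near (x : V1) (z : V2) : bool :=
  dec (exists j, (j <= B)%nat /\ walk adj2 j (iota x) z).

Definition shadow (L : list V1) : list V2 :=
  nodup eqdec (flat_map (fun x => ball nbr2 (iota x) B) L).

Definition pullback (L : list V1) (M' : list V2) : list V1 :=
  filter (fun x => existsb (near x) M') L.

Lemma near_shadow (L : list V1) (x : V1) (z : V2) :
  In x L -> near x z = true -> In z (shadow L).
Proof.
  intros Hx Hnear. apply (proj1 (decT _)) in Hnear. destruct Hnear as [j [Hj Hw]].
  apply nodup_In, in_flat_map. exists x; split; auto.
  eapply ball_cover; eauto.
Qed.

Lemma near_count (L : list V1) (x : V1) :
  (length (filter (near x) (shadow L)) <= (D2 + 1) ^ B)%nat.
Proof.
  apply Nat.le_trans with (length (ball nbr2 (iota x) B)); [| apply ball_length; auto].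
  apply NoDup_incl_length; [apply NoDup_filter, NoDup_nodup |].
  intros z Hz. apply filter_In in Hz. destruct Hz as [_ Hz]. apply (proj1 (decT _)) in Hz.
  destruct Hz as [j [Hj Hw]]. eapply ball_cover; eauto.
Qed.

Lemma fibre_size (b : V2) (l : list V1) :
  NoDup l -> (forall y, In y l -> iota y = b) -> (length l <= (D1 + 1) ^ F)%nat.
Proof.
  intros Hl Hfib. destruct l as [| y0 l0]; [simpl; lia |].
  apply Nat.le_trans with (length (ball nbr1 y0 F)); [| apply ball_length; auto].
  apply NoDup_incl_length; auto. intros y Hy.
  destruct (iota_fibres y0 y) as [n [Hn Hw]].
  { rewrite (Hfib y0), (Hfib y); simpl; auto. }
  eapply ball_cover; eauto.
Qed.

Lemma near_outside_pullback (L : list V1) (M' : list V2) (a : V1) (z : V2) :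
  In a L -> ~ In a (pullback L M') -> near a z = true ->
  In z (shadow L) /\ ~ In z M'.
Proof.
  intros Ha HaM Hnear. split; [eapply near_shadow; eauto |].
  intros HzM. apply HaM, filter_In. split; auto.
  apply existsb_exists. eauto.
Qed.

Lemma component_image (L : list V1) (M' : list V2) (a b : V1) :
  clos_refl_trans V1 (induced_adj adj1 (fun v => In v L /\ ~ In v (pullback L M'))) a b ->
  clos_refl_trans V2 (induced_adj adj2 (fun v => In v (shadow L) /\ ~ In v M'))
    (iota a) (iota b).
Proof.
  induction 1 as [a b Hab | a | a b d _ IH1 _ IH2].
  - destruct Hab as [[Ha HaM] [_ Hab]].
    destruct (iota_lipschitz a b Hab) as [m [Hm Hw]].
    apply (walk_induced adj2 _ m); auto. intros z j Hj Hwz.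
    apply (near_outside_pullback L M' a z Ha HaM), decT. exists j; split; [lia | auto].
  - apply rt_refl.
  - eapply rt_trans; eauto.
Qed.

Lemma pullback_components (L : list V1) (M' : list V2) (K' : R) :
  (forall z, In z (shadow L) -> ~ In z M' ->
     forall C' : list V2, NoDup C' ->
     (forall y, In y C' ->
        clos_refl_trans V2 (induced_adj adj2 (fun v => In v (shadow L) /\ ~ In v M')) z y) ->
     INR (length C') <= K') ->
  forall x, In x L -> ~ In x (pullback L M') ->
  forall C : list V1, NoDup C ->
  (forall y, In y C ->
     clos_refl_trans V1 (induced_adj adj1 (fun v => In v L /\ ~ In v (pullback L M'))) x y) ->
  INR (length C) <= INR ((D1 + 1) ^ F) * K'.
Proof.
  intros HK' x Hx HxM C HC Hreach.
  set (image := nodup eqdec (map iota C)).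
  assert (Hx' : In (iota x) (shadow L) /\ ~ In (iota x) M').
  { apply (near_outside_pullback L M' x); auto. apply decT. exists 0%nat; split; [lia | constructor]. }
  assert (Himage : INR (length image) <= K').
  { apply (HK' (iota x)); try apply Hx'; [apply NoDup_nodup |].
    intros z Hz. apply nodup_In, in_map_iff in Hz. destruct Hz as [y [<- Hy]].
    apply component_image, Hreach, Hy. }
  assert (Hcount : (length C <= (D1 + 1) ^ F * length image)%nat).
  { apply (fibre_count iota _ fibre_size image C HC).
    intros y Hy. apply nodup_In, in_map; auto. }
  apply le_INR in Hcount. rewrite mult_INR in Hcount.
  apply Rle_trans with (1 := Hcount). apply Rmult_le_compat_l; [apply pos_INR | auto].
Qed.

Theorem coarse_embedding_transfer : weighted_hyperfinite adj2 -> weighted_hyperfinite adj1.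
Proof.
  intros WH2 eps Heps.
  set (N1 := ((D1 + 1) ^ F)%nat). set (N2 := ((D2 + 1) ^ B)%nat).
  assert (HN1 : 0 < INR N1) by apply lt_0_INR, pow_succ_pos.
  assert (HN2 : 0 < INR N2) by apply lt_0_INR, pow_succ_pos.
  destruct (WH2 (eps / INR N2)) as [K' [HK' HWH]]; [apply Rdiv_lt_0_compat; lra |].
  exists (INR N1 * K'). split; [apply Rmult_lt_0_compat; auto |].
  intros L w HL Hw.
  destruct (HWH (shadow L) (rel_weight near w L) (NoDup_nodup _ _))
    as [M' [_ [_ [HM'w HM'c]]]].
  { intros z _. apply sumw_nonneg. intros x Hx. apply filter_In in Hx. apply Hw, Hx. }
  exists (pullback L M'). split; [apply NoDup_filter; auto |]. split.
  { intros x Hx. apply filter_In in Hx; apply Hx. }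
  split; [| apply pullback_components; auto].
  (* weight: union bound, hyperfiniteness of G2, then double counting *)
  assert (Htotal : sumw (rel_weight near w L) (shadow L) <= INR N2 * sumw w L)
    by (apply rel_weight_total; auto using near_count).
  apply Rle_trans with (1 := union_bound near w L Hw M').
  apply Rle_trans with (1 := HM'w).
  apply Rle_trans with (eps / INR N2 * (INR N2 * sumw w L)).
  - apply Rmult_le_compat_l; auto. apply Rlt_le, Rdiv_lt_0_compat; lra.
  - right. field. lra.
Qed.
End Transfer.

(** * Quasi-isometries are coarse embeddings *)

Lemma qi_coarse_lipschitz {V1 V2 : Type} (adj1 : V1 -> V1 -> Prop) (adj2 : V2 -> V2 -> Prop)
  (iota : V1 -> V2) (c : R) (B : nat) :
  is_graph adj1 -> connected adj2 -> 2 * c <= INR B ->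
  (forall x y n m, is_dist adj1 x y n -> is_dist adj2 (iota x) (iota y) m ->
     / c * INR n - c <= INR m <= c * INR n + c) ->
  forall x y, adj1 x y -> exists m, (m <= B)%nat /\ walk adj2 m (iota x) (iota y).
Proof.
  intros G1 C2 HB Hqi x y Hxy.
  destruct (exists_dist adj2 C2 (iota x) (iota y)) as [m Hm].
  pose proof (Hqi x y 1%nat m (is_dist_adj adj1 x y G1 Hxy) Hm) as [_ Hup].
  exists m; split; [| apply Hm]. apply INR_le. change (INR 1) with 1 in Hup. lra.
Qed.

Lemma qi_bounded_fibres {V1 V2 : Type} (adj1 : V1 -> V1 -> Prop) (adj2 : V2 -> V2 -> Prop)
  (iota : V1 -> V2) (c : R) (F : nat) :
  connected adj1 -> 0 < c -> c * c <= INR F ->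
  (forall x y n m, is_dist adj1 x y n -> is_dist adj2 (iota x) (iota y) m ->
     / c * INR n - c <= INR m <= c * INR n + c) ->
  forall x y, iota x = iota y -> exists n, (n <= F)%nat /\ walk adj1 n x y.
Proof.
  intros C1 Hc HF Hqi x y Hxy.
  destruct (exists_dist adj1 C1 x y) as [n Hn].
  assert (H0 : is_dist adj2 (iota x) (iota y) 0) by (rewrite Hxy; apply is_dist_refl).
  pose proof (Hqi x y n 0%nat Hn H0) as [Hlo _]. change (INR 0) with 0 in Hlo.
  exists n; split; [| apply Hn]. apply INR_le.
  assert (Hn_c : INR n <= c * c).
  { replace (INR n) with (c * (/ c * INR n)) by (field; lra).
    apply Rmult_le_compat_l; lra. }
  lra.
Qed.

Theorem proposition3p1 (V1 V2 : Type)
  (adj1 : V1 -> V1 -> Prop) (adj2 : V2 -> V2 -> Prop) :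
  is_graph adj1 -> connected adj1 -> infinite_vertices V1 -> bounded_degree adj1 ->
  is_graph adj2 -> connected adj2 -> infinite_vertices V2 -> bounded_degree adj2 ->
  quasi_isometric adj1 adj2 ->
  weighted_hyperfinite adj2 -> weighted_hyperfinite adj1.
Proof.
  intros G1 C1 _ BD1 _ C2 _ BD2 [iota [c [Hc [Hqi _]]]].
  destruct (choose_nbr adj1 BD1) as [D1 [nbr1 [Hlen1 Hnbr1]]].
  destruct (choose_nbr adj2 BD2) as [D2 [nbr2 [Hlen2 Hnbr2]]].
  destruct (nat_unbounded (2 * c)) as [B HB].
  destruct (nat_unbounded (c * c)) as [F HF].
  apply (coarse_embedding_transfer adj1 adj2 nbr1 D1 nbr2 D2 Hlen1 Hnbr1 Hlen2 Hnbr2 iota B F).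
  - exact (qi_coarse_lipschitz adj1 adj2 iota c B G1 C2 HB Hqi).
  - exact (qi_bounded_fibres adj1 adj2 iota c F C1 Hc HF Hqi).
Qed.
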